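(* Let $|\psi_{{\sf A}{\sf B}}\rangle\in\mathbb C^{d_{\sf A}}\otimes\mathbb C^{d_{\sf B}}$ be a unit vector and $\bar\omega_{\sf A}=\mathrm{tr}_{\sf B}\big(S_{\sf B}|\psi_{{\sf A}{\sf B}}\rangle\langle\psi_{{\sf A}{\sf B}}|^{\otimes2}\big)+\frac{S_{\sf A}}{\mathrm{tr}S_{\sf A}}\,\mathrm{tr}\big(A_{\sf A}A_{\sf B}|\psi_{{\sf A}{\sf B}}\rangle\langle\psi_{{\sf A}{\sf B}}|^{\otimes2}\big)$. Then $\bar\omega_{\sf A}$ belongs to the convex hull of $\{|\phi\rangle\langle\phi|^{\otimes2}:\phi\in\mathbb C^{d_{\sf A}},\ \|\phi\|=1\}$.
   Context: $|\psi_{{\sf A}{\sf B}}\rangle^{\otimes2}$ is regarded as a vector in $\mathbb C^{d_{\sf A}}_1\otimes\mathbb C^{d_{\sf B}}_2\otimes\mathbb C^{d_{\sf A}}_3\otimes\mathbb C^{d_{\sf B}}_4$; $\mathrm{tr}_{\sf B}$ is the partial trace over factors $2,4$. $S_{\sf A}$, $A_{\sf A}$ are the projectors onto the symmetric and antisymmetric subspaces of $\mathbb C^{d_{\sf A}}_1\otimes\mathbb C^{d_{\sf A}}_3$; $S_{\sf B}$, $A_{\sf B}$ those of $\mathbb C^{d_{\sf B}}_2\otimes\mathbb C^{d_{\sf B}}_4$ (extended by identities where needed). *)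

(* Complex scalars: any numClosedFieldType C (instantiated
   in the theorem with C := R[i] for R : realType, i.e. the complex numbers). *)
From HB Require Import structures.
From mathcomp Require Import all_boot all_order all_algebra.
From mathcomp Require Import complex.
From mathcomp Require Import reals.
Set Implicit Arguments. Unset Strict Implicit. Unset Printing Implicit Defensive.
Import Order.TTheory GRing.Theory Num.Theory.
Local Open Scope ring_scope.

Section QDefs.
Variable C : numClosedFieldType.

Definition op (T : finType) := T -> T -> C.

Definition opmul (T : finType) (P Q : op T) : op T :=
  fun x y => \sum_(z : T) P x z * Q z y.

Definition optr (T : finType) (P : op T) : C := \sum_(x : T) P x x.

Definition delta (T : finType) (x y : T) : C := (x == y)%:R.

Definition outer (T : finType) (v : T -> C) : op T := fun x y => v x * (v y)^*.

Definition tsq (T : finType) (v : T -> C) : (T * T)%type -> C :=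
  fun x => v x.1 * v x.2.

Variables dA dB : nat.
Definition IA := 'I_dA.
Definition IB := 'I_dB.
Definition T_AB := (IA * IB)%type.
(* (C^{dA}_1 (x) C^{dB}_2) (x) (C^{dA}_3 (x) C^{dB}_4), indexed by ((a1,b2),(a3,b4)) *)
Definition T4 := (T_AB * T_AB)%type.
Definition T_AA := (IA * IA)%type.

(* swap of factors 2 and 4 (the B copies) *)
Definition swapB (x : T4) : T4 := ((x.1.1, x.2.2), (x.2.1, x.1.2)).
(* swap of factors 1 and 3 (the A copies) *)
Definition swapA (x : T4) : T4 := ((x.2.1, x.1.2), (x.1.1, x.2.2)).
Definition swap2 (x : T_AA) : T_AA := (x.2, x.1).

Definition FB : op T4 := fun x y => delta x (swapB y).
Definition FA : op T4 := fun x y => delta x (swapA y).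
Definition FAA : op T_AA := fun x y => delta x (swap2 y).

Definition SB : op T4 := fun x y => (delta x y + FB x y) / 2%:R.
Definition AB : op T4 := fun x y => (delta x y - FB x y) / 2%:R.
Definition AA : op T4 := fun x y => (delta x y - FA x y) / 2%:R.
Definition SA2 : op T_AA := fun x y => (delta x y + FAA x y) / 2%:R.

Definition ptrB (M : op T4) : op T_AA :=
  fun x y => \sum_(b2 : IB) \sum_(b4 : IB) M ((x.1, b2), (x.2, b4)) ((y.1, b2), (y.2, b4)).

Definition Psi2 (psi : T_AB -> C) : op T4 := outer (tsq psi).

Definition omegaA (psi : T_AB -> C) : op T_AA :=
  fun x y => ptrB (opmul SB (Psi2 psi)) x y
             + SA2 x y / optr SA2 * optr (opmul (opmul AA AB) (Psi2 psi)).

Definition unit_vec (T : finType) (v : T -> C) : Prop := \sum_(x : T) `|v x| ^+ 2 = 1.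

Definition in_conv_sym_products (W : op T_AA) : Prop :=
  exists (n : nat) (w : 'I_n -> C) (phi : 'I_n -> IA -> C),
    [/\ forall i, 0 <= w i,
        \sum_(i < n) w i = 1,
        forall i, unit_vec (phi i)
      & forall x y, W x y = \sum_(i < n) w i * outer (tsq (phi i)) x y].

End QDefs.

(* For vectors [v b] (b in a finite set I) put [rho = \sum_b |v b><v b|] and let [F] swap
   the two tensor factors.  Averaging |phi><phi|^(x)2 over the 4^|I| phase patterns
   [phi = \sum_b i^(t b) v b], t : I -> Z/4, kills every term whose phase moment
   E[w1 w2 conj(w3) conj(w4)] vanishes, i.e. all but those with {b1, b2} = {b3, b4} as
   multisets; this exhibits (rho (x) rho)(1 + F) as a nonnegative combination of
   symmetric product states |phi><phi|^(x)2.
   Both summands of omega_A have this shape: tr_B(S_B |psi><psi|^(x)2) is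
   (rho_A (x) rho_A)(1 + F)/2 with rho_A = tr_B |psi><psi|, and S_A = (1 + F)/2, whose
   coefficient tr(A_A A_B |psi><psi|^(x)2) = |(1 - F_B)(psi (x) psi)|^2 / 4 is nonnegative.
   Finally tr omega_A = |psi|^4 = 1, so rescaling every generator to a unit vector turns
   the conic combination into a convex one. *)

From mathcomp Require Import all_boot all_order all_algebra.
From mathcomp Require Import complex.
From mathcomp Require Import reals.
From mathcomp Require Import ring.
Set Implicit Arguments. Unset Strict Implicit. Unset Printing Implicit Defensive.
Import Order.TTheory GRing.Theory Num.Theory.
Local Open Scope ring_scope.

Section SymmetricProducts.
Variable C : numClosedFieldType.

Lemma sum_delta (I : finType) (i0 : I) (F : I -> C) : \sum_i (i0 == i)%:R * F i = F i0.
Proof.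
rewrite (bigD1 i0) //= eqxx mul1r big1 ?addr0 // => i /negbTE.
by rewrite eq_sym => ->; rewrite mul0r.
Qed.

Lemma sum_delta2 (I : finType) (i1 i2 : I) (F : I -> I -> C) :
  \sum_a \sum_b ((i1 == a) && (i2 == b))%:R * F a b = F i1 i2.
Proof.
rewrite -(sum_delta i1 (F^~ i2)); apply: eq_bigr => a _.
rewrite -(sum_delta i2 (F a)) mulr_sumr; apply: eq_bigr => b _.
by rewrite -mulnb natrM mulrA.
Qed.

Lemma sum_delta_involutive (I : finType) (h : I -> I) (i0 : I) (F : I -> C) :
  involutive h -> \sum_i (i0 == h i)%:R * F i = F (h i0).
Proof.
move=> hK; rewrite (reindex_inj (inv_inj hK)) /=.
under eq_bigr do rewrite hK.
exact: sum_delta.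
Qed.

Lemma sum_symmetrizer (T : finType) (h : T -> T) (z : T) (g : T -> C) : involutive h ->
  \sum_u (delta C z u + delta C z (h u)) / 2%:R * g u = (g z + g (h z)) / 2%:R.
Proof.
move=> hK; rewrite -{1}(sum_delta z g) -(sum_delta_involutive z g hK) -big_split mulr_suml /=.
by apply: eq_bigr => u _; rewrite /delta; ring.
Qed.

Lemma sum_antisymmetrizer (T : finType) (h : T -> T) (z : T) (g : T -> C) : involutive h ->
  \sum_u (delta C z u - delta C z (h u)) / 2%:R * g u = (g z - g (h z)) / 2%:R.
Proof.
move=> hK; rewrite -{1}(sum_delta z g) -(sum_delta_involutive z g hK) -sumrB mulr_suml /=.
by apply: eq_bigr => u _; rewrite /delta; ring.
Qed.

Lemma mulr_sum4 (I : finType) (f1 f2 f3 f4 : I -> C) :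
  (\sum_b f1 b) * (\sum_b f2 b) * (\sum_b f3 b) * (\sum_b f4 b) =
  \sum_b1 \sum_b2 \sum_b3 \sum_b4 f1 b1 * f2 b2 * f3 b3 * f4 b4.
Proof.
rewrite !big_distrl /=; apply: eq_bigr => b1 _.
rewrite [f1 b1 * _]big_distrr /= !big_distrl /=; apply: eq_bigr => b2 _.
rewrite [_ * (\sum_b f3 b)]big_distrr /= !big_distrl /=; apply: eq_bigr => b3 _.
by rewrite big_distrr.
Qed.

Definition phase4 (t : 'I_4) : C := 'i ^+ t.

Lemma sum_phase4_pow_conj (p q : nat) : (p <= 2)%N -> (q <= 2)%N ->
  \sum_(t < 4) phase4 t ^+ p * (phase4 t)^* ^+ q = if p == q then 4%:R else 0.
Proof.
have i2 : ('i : C) * 'i = -1 by rewrite -expr2 sqrCi.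
have geom (z : C) : \sum_(t < 4) z ^+ t = (1 + z) * (1 + z * z).
  by rewrite !big_ord_recr big_ord0 /=; ring.
under eq_bigr do rewrite /phase4 rmorphXn /= conjCi !(exprAC _ _ p) !(exprAC _ _ q) -exprMn.
rewrite geom.
case: p => [|[|[|p]]] // _; case: q => [|[|[|q]]] // _;
  rewrite /= ?expr0 ?expr1 ?expr2;
  do 4 rewrite ?(mul1r, mulr1, mulN1r, mulrN1, mulNr, mulrN, opprK, i2); ring.
Qed.

Definition pairing (I : eqType) (b1 b2 b3 b4 : I) : bool :=
  (b1 == b3) && (b2 == b4) || (b1 == b4) && (b2 == b3).

Lemma pairingE (I : finType) (b1 b2 b3 b4 : I) :
  [forall k, (b1 == k) + (b2 == k) == (b3 == k) + (b4 == k)]%N = pairing b1 b2 b3 b4.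
Proof.
apply/forallP/idP => [eqk|]; last first.
  by case/orP => /andP[/eqP-> /eqP->] k //; rewrite addnC.
have count_cancel (b b' b'' : I) :
    (forall k, (b == k) + (b' == k) == (b == k) + (b'' == k))%N -> b' == b''.
  by move=> H; have := H b'; rewrite eqn_add2l eqxx (eq_sym b''); case: (b' == b'').
have /eqP := eqk b1; rewrite eqxx /pairing.
move: eqk; case: (eqVneq b1 b3) => [<- eqk _|_ eqk]; first by rewrite (count_cancel _ _ _ eqk).
move: eqk; case: (eqVneq b1 b4) => [<- eqk _|//].
rewrite (count_cancel b1 b2 b3) // => k.
by rewrite [X in _ == X]addnC eqk.
Qed.

Lemma phase4_moment (I : finType) (b1 b2 b3 b4 : I) :
  \sum_(th : {ffun I -> 'I_4})
     phase4 (th b1) * phase4 (th b2) * (phase4 (th b3))^* * (phase4 (th b4))^*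
  = (4 ^ #|I| * pairing b1 b2 b3 b4)%:R.
Proof.
pose p k := ((b1 == k) + (b2 == k))%N.
pose q k := ((b3 == k) + (b4 == k))%N.
pose F k (t : 'I_4) := phase4 t ^+ p k * (phase4 t)^* ^+ q k.
have prod_pick (f : I -> C) b : \prod_k f k ^+ (b == k) = f b.
  rewrite (bigD1 b) //= eqxx big1 ?mulr1 // => k /negbTE.
  by rewrite eq_sym => ->; rewrite expr0.
transitivity (\sum_(th : {ffun I -> 'I_4}) \prod_k F k (th k)).
  apply: eq_bigr => th _; rewrite /F /p /q.
  under [in RHS]eq_bigr do rewrite !exprD.
  by rewrite !big_split /= !prod_pick !mulrA.
(* Independent phases: the average factorizes over the coordinates [k]. *)
rewrite -(bigA_distr_bigA F) /= -pairingE.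
have le2 (x y : bool) : (x + y <= 2)%N by case: x; case: y.
under eq_bigr => k _ do rewrite /F sum_phase4_pow_conj ?le2 //.
case: forallP => [eq_pq | /forallP].
  under eq_bigr do rewrite eq_pq.
  by rewrite prodr_const muln1 natrX cardE.
rewrite negb_forall => /existsP[k /negbTE neq_k].
by rewrite muln0 (bigD1 k) //= neq_k mul0r.
Qed.

Lemma sum_pairing (I : finType) (f : I -> I -> C) (b1 b2 : I) :
  \sum_b3 \sum_b4 (pairing b1 b2 b3 b4)%:R * f b3 b4
  = f b1 b2 + f b2 b1 - (b1 == b2)%:R * f b1 b1.
Proof.
case: (eqVneq b1 b2) => [<- | n12].
  have E b3 b4 : pairing b1 b1 b3 b4 = (b1 == b3) && (b1 == b4).
    by rewrite /pairing [X in _ || X]andbC orbb.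
  under eq_bigr do under eq_bigr do rewrite E.
  by rewrite sum_delta2 mul1r addrK.
have E b3 b4 : (pairing b1 b2 b3 b4)%:R =
    ((b1 == b3) && (b2 == b4))%:R + ((b2 == b3) && (b1 == b4))%:R :> C.
  rewrite /pairing; case: (eqVneq b1 b3) => [<-|_] /=.
    by rewrite [b2 == b1]eq_sym (negbTE n12) andbF orbF addr0.
  by rewrite andbC add0r.
under eq_bigr do under eq_bigr do rewrite E mulrDl.
under eq_bigr do rewrite big_split.
by rewrite big_split /= !sum_delta2 mul0r subr0.
Qed.

Section Families.
Variables (I J : finType) (v : I -> J -> C).

Definition ket2 (b1 b2 : I) : (J * J)%type -> C := fun x => v b1 x.1 * v b2 x.2.

(* The operator [(rho (x) rho)(1 + F)], where [rho = \sum_b |v b><v b|] and [F] swaps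
   the two factors. *)
Definition sym_square : op C (J * J)%type :=
  fun x y => \sum_b1 \sum_b2 ket2 b1 b2 x * ((ket2 b1 b2 y)^* + (ket2 b2 b1 y)^*).

Definition phase_comb (th : {ffun I -> 'I_4}) : J -> C :=
  fun a => \sum_b phase4 (th b) * v b a.

Lemma phase_average_outer x y :
  \sum_(th : {ffun I -> 'I_4}) outer (tsq (phase_comb th)) x y
  = (4 ^ #|I|)%:R * (sym_square x y - \sum_b outer (tsq (v b)) x y).
Proof.
pose K b1 b2 b3 b4 := ket2 b1 b2 x * (ket2 b3 b4 y)^*.
transitivity (\sum_(th : {ffun I -> 'I_4}) \sum_b1 \sum_b2 \sum_b3 \sum_b4
   (phase4 (th b1) * phase4 (th b2) * (phase4 (th b3))^* * (phase4 (th b4))^*)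
   * K b1 b2 b3 b4).
  apply: eq_bigr => th _.
  rewrite /outer /tsq /phase_comb rmorphM !rmorph_sum mulrA mulr_sum4.
  do 4 apply: eq_bigr => ? _.
  by rewrite /K /ket2 !rmorphM /=; ring.
rewrite exchange_big /=.
under eq_bigr => b1 _ do (rewrite exchange_big /=; under eq_bigr => b2 _ do
  (rewrite exchange_big /=; under eq_bigr => b3 _ do
    (rewrite exchange_big /=; under eq_bigr => b4 _ do
       rewrite -mulr_suml phase4_moment natrM -mulrA))).
under eq_bigr => b1 _ do under eq_bigr => b2 _ do
  (under eq_bigr => b3 _ do rewrite -mulr_sumr; rewrite -mulr_sumr sum_pairing).
under eq_bigr do rewrite -mulr_sumr.
rewrite -mulr_sumr /sym_square -sumrB; congr (_ * _); apply: eq_bigr => b1 _.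
rewrite sumrB (sum_delta b1 (fun b2 => K b1 b2 b1 b1)).
by congr (_ - _); apply: eq_bigr => b2 _; rewrite mulrDr.
Qed.

End Families.

Definition in_cone_sym_products (T : finType) (W : op C (T * T)%type) : Prop :=
  exists (J : finType) (c : J -> C) (phi : J -> T -> C),
    (forall j, 0 <= c j) /\ forall x y, W x y = \sum_j c j * outer (tsq (phi j)) x y.

Lemma in_cone_sum_outer (T J : finType) (phi : J -> T -> C) :
  in_cone_sym_products (fun x y => \sum_j outer (tsq (phi j)) x y).
Proof. by exists J, (fun=> 1), phi; split=> // x y; apply: eq_bigr => j _; rewrite mul1r. Qed.

Lemma in_cone_conic (T : finType) (a1 a2 : C) (W1 W2 W : op C (T * T)%type) :
  0 <= a1 -> 0 <= a2 -> in_cone_sym_products W1 -> in_cone_sym_products W2 ->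
  (forall x y, W x y = a1 * W1 x y + a2 * W2 x y) -> in_cone_sym_products W.
Proof.
move=> a1_ge0 a2_ge0 [J1 [c1 [f1 [c1_ge0 W1E]]]] [J2 [c2 [f2 [c2_ge0 W2E]]]] WE.
exists (J1 + J2)%type, (fun j => match j with inl j1 => a1 * c1 j1 | inr j2 => a2 * c2 j2 end),
  (fun j => match j with inl j1 => f1 j1 | inr j2 => f2 j2 end); split.
  by case=> j; rewrite mulr_ge0.
move=> x y; rewrite WE W1E W2E big_sumType !mulr_sumr.
by congr (_ + _); apply: eq_bigr => j _; rewrite mulrA.
Qed.

Lemma sym_square_cone (I J : finType) (v : I -> J -> C) :
  in_cone_sym_products (sym_square v).
Proof.
apply: (in_cone_conic (a1 := ((4 ^ #|I|)%:R)^-1) (a2 := 1)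
  _ _ (in_cone_sum_outer (phase_comb v)) (in_cone_sum_outer v)) => [||x y].
- by rewrite invr_ge0 ler0n.
- exact: ler01.
rewrite phase_average_outer mulrA mulVf ?mul1r ?subrK //.
by rewrite pnatr_eq0 expn_eq0.
Qed.

Lemma optr_outer_tsq (T : finType) (f : T -> C) :
  optr (outer (tsq f)) = (\sum_a `|f a| ^+ 2) ^+ 2.
Proof.
rewrite expr2 mulr_suml (eq_bigr (fun a => \sum_b `|f a| ^+ 2 * `|f b| ^+ 2)); last first.
  by move=> a _; rewrite mulr_sumr.
rewrite (pair_bigA _ (fun a b => `|f a| ^+ 2 * `|f b| ^+ 2)) /=.
by apply: eq_bigr => [[a b]] _; rewrite /outer /tsq /= rmorphM !normCK; ring.
Qed.

(* A zero vector is replaced by the basis vector [a0]; it only ever carries weight [0]. *)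
Definition normalize (T : finType) (a0 : T) (f : T -> C) : T -> C :=
  let s := \sum_a `|f a| ^+ 2 in
  if s == 0 then fun a => (a0 == a)%:R else fun a => f a / sqrtC s.

Section Normalize.
Variables (T : finType) (a0 : T) (f : T -> C).
Let s := \sum_a `|f a| ^+ 2.

Lemma normalize_unit : unit_vec (normalize a0 f).
Proof.
rewrite /unit_vec /normalize -/s; case: ifP => [_ | /negbT s_neq0].
  rewrite (bigD1 a0) //= eqxx normr1 expr1n big1 ?addr0 // => a /negbTE.
  by rewrite eq_sym => ->; rewrite normr0 expr0n.
have r_ge0 : 0 <= sqrtC s by rewrite sqrtC_ge0 sumr_ge0 // => a _; rewrite exprn_ge0.
under eq_bigr do rewrite normrM normfV expr_div_n (ger0_norm r_ge0) sqrtCK.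
by rewrite -mulr_suml divff.
Qed.

Lemma outer_tsq_normalize x y :
  outer (tsq f) x y = s ^+ 2 * outer (tsq (normalize a0 f)) x y.
Proof.
rewrite /normalize -/s; case: ifP => [/eqP s0 | /negbT s_neq0].
  have f0 a : f a = 0.
    have /eqP : `|f a| ^+ 2 = 0 by apply: (psumr_eq0P _ s0) => // b _; rewrite exprn_ge0.
    by rewrite expf_eq0 /= normr_eq0 => /eqP.
  by rewrite s0 expr0n /= mul0r /outer /tsq !f0 !mul0r.
have r_ge0 : 0 <= sqrtC s by rewrite sqrtC_ge0 sumr_ge0 // => a _; rewrite exprn_ge0.
have r_neq0 : sqrtC s != 0 by rewrite sqrtC_eq0.
set r := sqrtC s in r_ge0 r_neq0 *.
have -> : s = r ^+ 2 by rewrite sqrtCK.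
rewrite /outer /tsq !rmorphM !fmorphV /= (geC0_conj r_ge0).
by field.
Qed.

End Normalize.

Lemma in_conv_sym_products_fin (d : nat) (J : finType) (w : J -> C) (phi : J -> IA d -> C)
    (W : op C (T_AA d)) :
  (forall j, 0 <= w j) -> \sum_j w j = 1 -> (forall j, unit_vec (phi j)) ->
  (forall x y, W x y = \sum_j w j * outer (tsq (phi j)) x y) -> in_conv_sym_products W.
Proof.
have reindex (F : J -> C) : \sum_j F j = \sum_(i < #|J|) F (enum_val i).
  by rewrite -(big_enum_val (A := J)); apply: eq_bigl => j; rewrite inE.
move=> w_ge0 w1 phi1 WE; exists #|J|, (w \o enum_val), (phi \o enum_val).
split=> [i | | i | x y] /=; [exact: w_ge0 | by rewrite -w1 reindex | exact: phi1 |].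
by rewrite WE reindex.
Qed.

Lemma in_conv_of_cone (d : nat) (W : op C (T_AA d)) :
  in_cone_sym_products W -> optr W = 1 -> in_conv_sym_products W.
Proof.
move=> [J [c [f [c_ge0 WE]]]] trW.
have [a0 _ | noA] := pickP (@predT (IA d)); last first.
  have: optr W = 0 by rewrite /optr big_pred0 // => -[a _]; exact: noA.
  by rewrite trW => /eqP; rewrite oner_eq0.
pose s j := \sum_a `|f j a| ^+ 2.
apply: (in_conv_sym_products_fin (w := fun j => c j * s j ^+ 2)
                                  (phi := fun j => normalize a0 (f j))).
- by move=> j; rewrite mulr_ge0 // exprn_ge0 // sumr_ge0 // => a _; rewrite exprn_ge0.
- rewrite -trW /optr; under [RHS]eq_bigr do rewrite WE.
  rewrite exchange_big; apply: eq_bigr => j _.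
  by rewrite -mulr_sumr -optr_outer_tsq.
- by move=> j; exact: normalize_unit.
- by move=> x y; rewrite WE; apply: eq_bigr => j _; rewrite (outer_tsq_normalize a0) mulrA.
Qed.

End SymmetricProducts.

Section Bipartite.
Variables (C : numClosedFieldType) (dA dB : nat) (psi : T_AB dA dB -> C).

Local Notation Psi := (Psi2 psi).

Lemma swapB_involutive : involutive (@swapB dA dB). Proof. by case=> [[a b] [c e]]. Qed.
Lemma swapA_involutive : involutive (@swapA dA dB). Proof. by case=> [[a b] [c e]]. Qed.

Lemma tsq_swapA z : tsq psi (swapA z) = tsq psi (swapB z).
Proof. by case: z => [[a b] [c e]]; rewrite /tsq mulrC. Qed.

Lemma tsq_swapBA z : tsq psi (swapB (swapA z)) = tsq psi z.
Proof. by case: z => [[a b] [c e]]; rewrite /tsq mulrC. Qed.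

Definition vB (b : IB dB) (a : IA dA) : C := psi (a, b).
Definition uA (a a' : IA dA) : C := (a == a')%:R.

Lemma ptrB_SB_Psi2 x y : ptrB (opmul (@SB C dA dB) Psi) x y = sym_square vB x y / 2%:R.
Proof.
transitivity ((\sum_b1 \sum_b2 ket2 vB b1 b2 x * (ket2 vB b1 b2 y)^*
               + \sum_b1 \sum_b2 ket2 vB b2 b1 x * (ket2 vB b1 b2 y)^*) / 2%:R).
  rewrite mulrDl !mulr_suml -big_split; apply: eq_bigr => b1 _.
  rewrite !mulr_suml -big_split; apply: eq_bigr => b2 _.
  rewrite /opmul /SB /FB (sum_symmetrizer _ _ swapB_involutive).
  by rewrite /Psi2 /outer /tsq /ket2 /vB /=; ring.
rewrite [X in _ + X]exchange_big -big_split /=; congr (_ / _).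
by apply: eq_bigr => b1 _; rewrite -big_split; apply: eq_bigr => b2 _; rewrite mulrDr.
Qed.

Lemma SA2_sym_square x y : @SA2 C dA x y = sym_square uA x y / 2%:R.
Proof.
rewrite /sym_square (eq_bigr (fun a1 => \sum_a2 ((x.1 == a1) && (x.2 == a2))%:R *
    (((a1 == y.1) && (a2 == y.2))%:R + ((a2 == y.1) && (a1 == y.2))%:R))); last first.
  move=> a1 _; apply: eq_bigr => a2 _.
  rewrite /ket2 /uA !rmorphM !rmorph_nat -!natrM !mulnb.
  by rewrite [a1 == x.1]eq_sym [a2 == x.2]eq_sym.
rewrite sum_delta2 /SA2 /FAA /delta /swap2 /=.
by case: x => x1 x2; case: y => y1 y2; rewrite !xpair_eqE /= [(x1 == y2) && _]andbC.
Qed.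

Lemma optr_ptrB (M : op C (T4 dA dB)) : optr (ptrB M) = optr M.
Proof.
have sum_pair (T1 T2 : finType) (F : T1 * T2 -> C) : \sum_p F p = \sum_a \sum_b F (a, b).
  by rewrite pair_bigA; apply: eq_bigr => -[].
rewrite /optr /ptrB !sum_pair /=; apply: eq_bigr => a1 _.
rewrite [LHS]exchange_big; apply: eq_bigr => b2 _.
by rewrite sum_pair.
Qed.

Lemma optr_AA_AB :
  optr (opmul (opmul (@AA C dA dB) (@AB C dA dB)) Psi)
  = (\sum_z (Psi z z - Psi (swapB z) z)) / 2%:R.
Proof.
rewrite /optr mulr_suml; apply: eq_bigr => x _; rewrite /opmul.
under eq_bigr => w _ do rewrite /AA /FA (sum_antisymmetrizer _ _ swapA_involutive).
rewrite (eq_bigr (fun w => @AB C dA dB x w * (Psi w x / 2%:R)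
                           - @AB C dA dB (swapA x) w * (Psi w x / 2%:R))) => [|w _]; last by ring.
rewrite sumrB /AB /FB !(sum_antisymmetrizer _ _ swapB_involutive).
by rewrite /Psi2 /outer tsq_swapA tsq_swapBA; field.
Qed.

Lemma optr_AA_AB_ge0 : 0 <= optr (opmul (opmul (@AA C dA dB) (@AB C dA dB)) Psi).
Proof.
have sum_swapB (F : T4 dA dB -> C) : \sum_z F (swapB z) = \sum_z F z.
  by rewrite [RHS](reindex_inj (inv_inj swapB_involutive)).
suff -> : optr (opmul (opmul (@AA C dA dB) (@AB C dA dB)) Psi)
          = (\sum_z `|tsq psi z - tsq psi (swapB z)| ^+ 2) / 4%:R.
  by rewrite divr_ge0 ?ler0n // sumr_ge0 // => z _; rewrite exprn_ge0.
rewrite optr_AA_AB.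
under [in RHS]eq_bigr do rewrite normCK rmorphB mulrBl !mulrBr.
have cross : \sum_z tsq psi z * (tsq psi (swapB z))^*
              = \sum_z tsq psi (swapB z) * (tsq psi z)^*.
  by rewrite -sum_swapB; apply: eq_bigr => z _; rewrite swapB_involutive.
have diag : \sum_z tsq psi (swapB z) * (tsq psi (swapB z))^* = \sum_z tsq psi z * (tsq psi z)^*.
  exact: (sum_swapB (fun z => tsq psi z * (tsq psi z)^*)).
by rewrite !sumrB cross diag /Psi2 /outer; field.
Qed.

Lemma SA2_diag_ge0 x : 0 <= @SA2 C dA x x.
Proof. by rewrite /SA2 divr_ge0 ?addr_ge0 ?ler0n. Qed.

Lemma optr_SA2_gt0 : (0 < dA)%N -> 0 < optr (@SA2 C dA).
Proof.
move=> dA_gt0; pose a0 : IA dA := Ordinal dA_gt0.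
rewrite /optr (bigD1 (a0, a0)) //= ltr_wpDr ?sumr_ge0 // => [x _|]; first exact: SA2_diag_ge0.
by rewrite /SA2 /FAA /delta /swap2 /= divr_gt0 ?addr_gt0 ?ltr01 ?ltr0n.
Qed.

Lemma omegaA_in_cone : in_cone_sym_products (omegaA psi).
Proof.
set K := optr (opmul (opmul (@AA C dA dB) (@AB C dA dB)) Psi).
set t := optr (@SA2 C dA).
have t_ge0 : 0 <= t by apply: sumr_ge0 => x _; exact: SA2_diag_ge0.
apply: (in_cone_conic (a1 := 2%:R^-1) (a2 := K / t / 2%:R) _ _
  (sym_square_cone vB) (sym_square_cone uA)) => [||x y].
- by rewrite invr_ge0 ler0n.
- by rewrite !divr_ge0 ?ler0n // optr_AA_AB_ge0.
by rewrite /omegaA ptrB_SB_Psi2 SA2_sym_square -/K -/t; ring.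
Qed.

Lemma optr_omegaA : unit_vec psi -> optr (omegaA psi) = 1.
Proof.
move=> psi1.
have dA_gt0 : (0 < dA)%N.
  rewrite lt0n; apply/eqP => dA0; move: psi1; rewrite /unit_vec big_pred0 => [/eqP|[[a lt_a] b]].
    by rewrite eq_sym oner_eq0.
  by rewrite dA0 in lt_a.
have t_neq0 : optr (@SA2 C dA) != 0 by rewrite gt_eqF ?optr_SA2_gt0.
have -> : optr (omegaA psi) = optr (ptrB (opmul (@SB C dA dB) Psi))
                              + optr (opmul (opmul (@AA C dA dB) (@AB C dA dB)) Psi).
  by rewrite {1}/optr big_split -mulr_suml -mulr_suml divff ?mul1r.
have <- : optr Psi = 1 by rewrite optr_outer_tsq psi1 expr1n.
rewrite optr_ptrB optr_AA_AB {1}/optr /opmul.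
under eq_bigr do rewrite /SB /FB (sum_symmetrizer _ _ swapB_involutive).
by rewrite mulr_suml -big_split /=; apply: eq_bigr => z _; field.
Qed.

End Bipartite.

Unset Implicit Arguments.

Theorem mainTheorem10 (R : realType) (dA dB : nat) (psi : T_AB dA dB -> R[i]) :
  unit_vec psi -> in_conv_sym_products (omegaA psi).
Proof.
move=> psi1; apply: in_conv_of_cone; [exact: omegaA_in_cone | exact: optr_omegaA].
Qed.
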